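(* Assume the language contains infinitely many atoms (of a given sort) and no restriction is placed on the atoms allowed in generalizations. Then anti-unification for nominal terms-in-context is of nullary type: there exist two terms-in-context $p_1,p_2$ that have no minimal complete set of generalizations (in particular, they have no least general generalization).
   Context: Nominal terms $t::=f(t_1,\dots,t_n)\mid a\mid a.t\mid \pi\cdot X$ over sorted atoms $a,b,\dots$, variables $X,Y,\dots$ and function symbols; $\pi$ ranges over permutations (finite sequences of swappings $(a\,b)$ of same-sorted atoms), $\pi\bullet t$ is the swapping action, substitutions $\sigma$ map variables to terms (application allows atom capture and $(\pi\cdot X)\sigma=\pi\bullet(X\sigma)$). A freshness context is a finite set of constraints $a\# X$; $\nabla\vdash a\# t$ and $\nabla\vdash t\approx t'$ are the standard nominal freshness and $\alpha$-equivalence judgments (Urban–Pitts–Gabbay): $\nabla\vdash a\approx a$; $\nabla\vdash a.t\approx a.t'$ if $\nabla\vdash t\approx t'$; $\nabla\vdash a.t\approx a'.t'$ if $a\neq a'$, $\nabla\vdash t\approx(a\,a')\bullet t'$ and $\nabla\vdash a\# t'$; $\nabla\vdash\pi\cdot X\approx\pi'\cdot X$ if $a\# X\in\nabla$ for all $a$ with $\pi\bullet a\neq\pi'\bullet a$; applications componentwise; $\nabla\vdash a\# a'$ if $a\ne a'$; $\nabla\vdash a\#\pi\cdot X$ if $\pi^{-1}\bullet a\# X\in\nabla$; $a\#$ distributes over applications; $\nabla\vdash a\# a.t$; $\nabla\vdash a\# a'.t$ if $a\ne a'$ and $\nabla\vdash a\# t$. For a freshness context $\nabla$ and substitution $\sigma$,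 $\nabla\sigma$ is the minimal freshness context $\Delta$ with $\Delta\vdash a\# X\sigma$ for all $a\# X\in\nabla$ (computed by the standard simplification of freshness formulas; undefined/$\bot$ if none exists). $\sigma$ respects $\nabla$ if for all $X$, no atom $a$ with $a\# X\in\nabla$ occurs free in $X\sigma$ outside suspensions. A term-in-context is a pair $\langle\nabla,t\rangle$. $\langle\nabla_1,t_1\rangle\preceq\langle\nabla_2,t_2\rangle$ if there is a substitution $\sigma$ respecting $\nabla_1$ with $\nabla_1\sigma\subseteq\nabla_2$ and $\nabla_2\vdash t_1\sigma\approx t_2$. A generalization of $p_1,p_2$ is a term-in-context $p$ with $p\preceq p_1$ and $p\preceq p_2$. A complete set of generalizations of $p_1,p_2$ is a set $G$ of generalizations such that every generalization $p$ of $p_1,p_2$ satisfies $p\preceq q$ for some $q\in G$; it is minimal if no two distinct elements of $G$ are related by $\preceq$. Anti-unification is of nullary type if some pair of terms-in-context has no minimal complete set of generalizations. *)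

From mathcomp Require Import all_boot.
From Stdlib Require Import List.

Set Implicit Arguments.
Unset Strict Implicit.
Unset Printing Implicit Defensive.

Record lang := Lang {
  atom : eqType;
  srt : Type;
  asort : atom -> srt;
  fsym : Type
}.

Definition var := nat.

Section Nominal.
Context (L : lang).
Local Notation A := (atom L).

(* permutations: finite sequences of swappings *)
Definition perm := list (A * A).

Definition swap_atom (a b c : A) : A :=
  if c == a then b else if c == b then a else c.

Fixpoint perm_act (p : perm) (c : A) : A :=
  match p with
  | nil => c
  | (a, b) :: p' => swap_atom a b (perm_act p' c)
  end.

Definition perm_inv (p : perm) : perm := rev p.

Definition wf_perm (p : perm) : Prop :=
  forall a b, In (a, b) p -> asort a = asort b.

Inductive term : Type :=
  | Fn : fsym L -> list term -> term
  | At : A -> term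
  | Ab : A -> term -> term
  | Su : perm -> var -> term.

Fixpoint wf_term (t : term) : Prop :=
  match t with
  | Fn _ ts => (fix go (l : list term) : Prop :=
                  match l with nil => True | u :: l' => wf_term u /\ go l' end) ts
  | At _ => True
  | Ab _ u => wf_term u
  | Su p _ => wf_perm p
  end.

Fixpoint perm_term (p : perm) (t : term) : term :=
  match t with
  | Fn f ts => Fn f (map (perm_term p) ts)
  | At a => At (perm_act p a)
  | Ab a u => Ab (perm_act p a) (perm_term p u)
  | Su q X => Su (p ++ q) X
  end.

Definition subst := var -> term.

Fixpoint subst_app (s : subst) (t : term) : term :=
  match t with
  | Fn f ts => Fn f (map (subst_app s) ts)
  | At a => At a
  | Ab a u => Ab a (subst_app s u)
  | Su p X => perm_term p (s X)
  end.

Definition wf_subst (s : subst) : Prop := forall X, wf_term (s X).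

(* freshness contexts: finite sets of constraints a # X *)
Definition fctx := list (A * var).

Definition fctx_sub (D1 D2 : fctx) : Prop := forall c, In c D1 -> In c D2.

Inductive fresh (D : fctx) (a : A) : term -> Prop :=
  | fr_atom : forall b, a <> b -> fresh D a (At b)
  | fr_susp : forall p X, In (perm_act (perm_inv p) a, X) D -> fresh D a (Su p X)
  | fr_fn : forall f ts, Forall (fresh D a) ts -> fresh D a (Fn f ts)
  | fr_ab_same : forall t, fresh D a (Ab a t)
  | fr_ab_diff : forall b t, a <> b -> fresh D a t -> fresh D a (Ab b t).

Inductive alpha (D : fctx) : term -> term -> Prop :=
  | al_atom : forall a, alpha D (At a) (At a)
  | al_ab_same : forall a t t', alpha D t t' -> alpha D (Ab a t) (Ab a t')
  | al_ab_diff : forall a a' t t', a <> a' -> asort a = asort a' ->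
      alpha D t (perm_term ((a, a') :: nil) t') -> fresh D a t' ->
      alpha D (Ab a t) (Ab a' t')
  | al_susp : forall p p' X,
      (forall a, perm_act p a <> perm_act p' a -> In (a, X) D) ->
      alpha D (Su p X) (Su p' X)
  | al_fn : forall f ts ts', Forall2 (alpha D) ts ts' -> alpha D (Fn f ts) (Fn f ts').

(* standard simplification of a freshness formula a # t into a minimal
   freshness context (None = unsatisfiable) *)
Fixpoint fresh_simp (a : A) (t : term) : option fctx :=
  match t with
  | At b => if a == b then None else Some nil
  | Su p X => Some ((perm_act (perm_inv p) a, X) :: nil)
  | Fn _ ts =>
      (fix go (l : list term) : option fctx :=
         match l with
         | nil => Some nil
         | u :: l' => match fresh_simp a u, go l' with
                      | Some d1, Some d2 => Some (d1 ++ d2)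
                      | _, _ => None
                      end
         end) ts
  | Ab b u => if a == b then Some nil else fresh_simp a u
  end.

(* D sigma : minimal context entailing a # X sigma for all a # X in D *)
Fixpoint fctx_subst (D : fctx) (s : subst) : option fctx :=
  match D with
  | nil => Some nil
  | (a, X) :: D' => match fresh_simp a (s X), fctx_subst D' s with
                    | Some d1, Some d2 => Some (d1 ++ d2)
                    | _, _ => None
                    end
  end.

Fixpoint occurs_free (a : A) (t : term) : Prop :=
  match t with
  | Fn _ ts => (fix go (l : list term) : Prop :=
                  match l with nil => False | u :: l' => occurs_free a u \/ go l' end) ts
  | At b => a = b
  | Ab b u => a <> b /\ occurs_free a u
  | Su _ _ => False
  end.

Definition respects (s : subst) (D : fctx) : Prop :=
  forall a X, In (a, X) D -> ~ occurs_free a (s X).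

Definition tic := (fctx * term)%type.

Definition wf_tic (p : tic) : Prop := wf_term p.2.

Definition more_general (p q : tic) : Prop :=
  exists s : subst, wf_subst s /\ respects s p.1 /\
    (exists D, fctx_subst p.1 s = Some D /\ fctx_sub D q.1) /\
    alpha q.1 (subst_app s p.2) q.2.

Definition generalization (p1 p2 p : tic) : Prop :=
  wf_tic p /\ more_general p p1 /\ more_general p p2.

Definition complete_set (p1 p2 : tic) (G : tic -> Prop) : Prop :=
  (forall q, G q -> generalization p1 p2 q) /\
  (forall p, generalization p1 p2 p -> exists q, G q /\ more_general p q).

Definition minimal_complete_set (p1 p2 : tic) (G : tic -> Prop) : Prop :=
  complete_set p1 p2 G /\
  (forall q q', G q -> G q' -> q <> q' -> ~ more_general q q').

Definition nullary_AU : Prop :=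
  exists p1 p2 : tic, wf_tic p1 /\ wf_tic p2 /\
    ~ exists G, minimal_complete_set p1 p2 G.

End Nominal.

Definition infinitely_many_atoms (L : lang) (s : srt L) : Prop :=
  forall l : list (atom L), exists a, asort a = s /\ ~ In a l.

(* Take two distinct atoms a and b.  Every generalization of <∅, a> and <∅, b>
   is a suspension <D, π·X>, and for an atom c fresh for a, b, D and π the
   strictly less general <D ∪ {c # X}, π·X> is again a generalization.  Every
   term-in-context above the refinement is also above <D, π·X>, so in a minimal
   complete set G the element <D, π·X> would have to be at least as general as
   its own refinement, which it is not.  Hence no element of G is of that form,
   yet G must cover <∅, id·X>. *)
From mathcomp Require Import all_boot.
From Stdlib Require Import List.

Set Implicit Arguments.
Unset Strict Implicit.

Section NominalAntiUnification.
Context {L : lang}.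
Local Notation A := (atom L).

Fixpoint perm_atoms (p : perm L) : list A :=
  if p is (x, y) :: p' then x :: y :: perm_atoms p' else nil.

Lemma perm_act_cat (p q : perm L) x : perm_act (p ++ q) x = perm_act p (perm_act q x).
Proof. by elim: p => [//|[u v] p IH] /=; rewrite IH. Qed.

Lemma swap_atomK (u v : A) : involutive (swap_atom u v).
Proof.
move=> x; rewrite /swap_atom.
have [->|xu] := eqVneq x u; first by rewrite eqxx; have [->|] := eqVneq v u; rewrite ?eqxx.
have [->|xv] := eqVneq x v; first by rewrite eqxx.
by rewrite (negbTE xu) (negbTE xv).
Qed.

Lemma perm_actK (p : perm L) : cancel (perm_act p) (perm_act (perm_inv p)).
Proof.
elim: p => [//|[u v] p IH] x /=.
by rewrite /perm_inv /= perm_act_cat /= swap_atomK IH.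
Qed.

Lemma perm_act_inj (p : perm L) : injective (perm_act p).
Proof. exact: can_inj (perm_actK p). Qed.

Lemma perm_act_notin (p : perm L) c : ~ In c (perm_atoms p) -> perm_act p c = c.
Proof.
elim: p => [//|[u v] p IH] /= c_notin.
rewrite IH => [|c_in]; last by apply: c_notin; right; right.
rewrite /swap_atom.
case: (c =P u) => [cu|_]; first by case: c_notin; left.
by case: (c =P v) => [cv|_] //; case: c_notin; right; left.
Qed.

Lemma alpha_At_r (D : fctx L) t a : alpha D t (At a) -> t = At a.
Proof. by move=> H; inversion H. Qed.

Lemma perm_term_At (p : perm L) t a :
  perm_term p t = At a -> exists2 d, t = At d & perm_act p d = a.
Proof. by case: t => //= d [<-]; exists d. Qed.

Lemma more_general_susp_At (D : fctx L) X a : more_general (nil, Su nil X) (D, At a).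
Proof.
exists (fun _ => At a); do !split => //; last by constructor.
by exists nil; split => // ? [].
Qed.

Lemma generalization_At_susp (a b : A) (p : tic L) : a <> b ->
  generalization (nil, At a) (nil, At b) p -> exists D pi X, p = (D, Su pi X).
Proof.
case: p => D t ab [_ [[s1 [_ [_ [_ /alpha_At_r ta]]]] [s2 [_ [_ [_ /alpha_At_r tb]]]]]].
case: t ta tb => //= [d [da] [db]|pi X _ _]; last by exists D, pi, X.
by case: ab; rewrite -da -db.
Qed.

Lemma more_general_consl (D : fctx L) a Y t q :
  more_general ((a, Y) :: D, t) q -> more_general (D, t) q.
Proof.
move=> [s [s_wf [s_resp [[Ds [/= Es sub]] al]]]].
exists s; do !split => //; first by move=> b Z bZ; apply: s_resp; right.
move: Es.
case: fresh_simp => // d1; case: fctx_subst => // d2 [Ds_def].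
by exists d2; split => // x x_in; apply: sub; rewrite -Ds_def; apply: in_or_app; right.
Qed.

Lemma more_general_fresh_At (D E : fctx L) pi X c a :
  more_general (D, Su pi X) (E, At a) -> ~ In c (perm_atoms pi) -> c <> a ->
  more_general ((c, X) :: D, Su pi X) (E, At a).
Proof.
move=> [s [s_wf [s_resp [[Ds [/= Es sub]] al]]]] c_pi ca.
have [d sX pid] := perm_term_At (alpha_At_r al).
have cd : c <> d by move=> cd; apply: ca; rewrite -pid -cd perm_act_notin.
exists s; do !split => //.
  by move=> b Y /= [[<- <-]|bY]; [rewrite sX | apply: s_resp].
by exists Ds; split => //=; rewrite sX /= (introF eqP cd) Es.
Qed.

(* An instance alpha-equivalent to [π·X] forces [s X = ρ·X]; then [c # X]
   instantiates to [ρ⁻¹ c # X], which must lie in [D], while the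
   alpha-equivalence of [πρ·X] and [π·X] forces [ρ c = c] or [c # X ∈ D]. *)
Lemma more_general_fresh_consN (D : fctx L) pi X c : ~ In (c, X) D ->
  ~ more_general ((c, X) :: D, Su pi X) (D, Su pi X).
Proof.
move=> cX_notin [s [_ [_ [[Ds [/= Es sub]] /= al]]]].
case: (s X) al Es => [f ts|d|d u|rho Y] al; try by inversion al.
inversion al as [| | | p p' Z rho_pi |]; subst.
case: fctx_subst => //= D' [Ds_def].
have inv_c : In (perm_act (perm_inv rho) c, X) D by apply: sub; rewrite -Ds_def; left.
case: (perm_act rho c =P c) => [rho_c|rho_c].
  by apply: cX_notin; rewrite -{1}rho_c perm_actK in inv_c.
by apply: cX_notin; apply: rho_pi; rewrite perm_act_cat => /perm_act_inj.
Qed.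

Lemma minimal_complete_set_refinement (p1 p2 : tic L) G q q' :
  minimal_complete_set p1 p2 G -> G q -> generalization p1 p2 q' ->
  (forall r, more_general q' r -> more_general q r) -> ~ ~ more_general q' q.
Proof.
move=> [[_ complete] minimal] Gq gen_q' refine q'_q.
have [q'' [Gq'' q'_q'']] := complete _ gen_q'.
apply: (minimal _ _ Gq Gq'') => [qq''|]; last exact: refine.
by apply: q'_q; rewrite qq''.
Qed.

End NominalAntiUnification.

Theorem theorem2 (L : lang) (s : srt L) :
  infinitely_many_atoms s -> nullary_AU L.
Proof.
move=> inf_atoms.
have [a _] := inf_atoms nil.
have [b [_ b_notin]] := inf_atoms (a :: nil).
have ab : a <> b by move=> ab; apply: b_notin; left.
exists (nil, At a), (nil, At b); do 2!split => //.
move=> [G minG]; have [[gen complete] _] := minG.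
have [q [Gq _]] : exists q, G q /\ more_general (nil, Su nil 0) q.
  by apply: complete; split => //; split; apply: more_general_susp_At.
have [D [pi [X q_def]]] := generalization_At_susp ab (gen q Gq).
have [c [_ c_notin]] := inf_atoms (a :: b :: map fst D ++ perm_atoms pi).
have ca : c <> a by move=> ca; apply: c_notin; left.
have cb : c <> b by move=> cb; apply: c_notin; right; left.
have c_not_D : ~ In (c, X) D.
  by move=> cX; apply: c_notin; do 2!right; apply: in_or_app; left; apply: (in_map fst) cX.
have c_not_pi : ~ In c (perm_atoms pi).
  by move=> cpi; apply: c_notin; do 2!right; apply: in_or_app; right.
have [q_wf [q_a q_b]] := gen q Gq; rewrite q_def in Gq q_wf q_a q_b.
apply: (minimal_complete_set_refinement (q' := ((c, X) :: D, Su pi X)) minG Gq).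
- by split=> //; split; apply: more_general_fresh_At.
- exact: more_general_consl.
- exact: more_general_fresh_consN.
Qed.
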